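(* Let $(A,\mathit{Con},\mid\!\sim)$ be an abstract nonmonotonic system. For every $X\in\mathit{Con}$, $$\bigcap\{\widetilde{Y}\mid Y\in\mathit{Con},\ Y\subseteq X\subseteq\widetilde{Y}\}=\widetilde{X}.$$
   Context: An abstract nonmonotonic system is a triple $(A,\mathit{Con},\mid\!\sim)$ where $\mathit{Con}$ is a collection of finite subsets of $A$ and $\mid\!\sim\ \subseteq\mathit{Con}\times\mathit{Con}$, satisfying: (1) $X\subseteq Y\in\mathit{Con}\Rightarrow X\in\mathit{Con}$; (2) $a\in A\Rightarrow\{a\}\in\mathit{Con}$; (3) $X\mid\!\sim T\Rightarrow X\cup T\in\mathit{Con}$; (4) $Y\subseteq X\Rightarrow X\mid\!\sim Y$; (5) $X\mid\!\sim T$ and $T\cup X\mid\!\sim Y$ imply $X\mid\!\sim Y$; (6) $X\mid\!\sim Y$ and $X\mid\!\sim Z$ imply $X\mid\!\sim Y\cup Z$. For $X\in\mathit{Con}$, $\widetilde{X}:=\{t\in A\mid X\mid\!\sim\{t\}\}$. *)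

From mathcomp Require Import all_boot.
From mathcomp Require Import boolp classical_sets cardinality.
Set Implicit Arguments. Unset Strict Implicit. Unset Printing Implicit Defensive.
Local Open Scope classical_set_scope.

Record ANS (A : Type) (Con : set (set A)) (nm : set A -> set A -> Prop) : Prop := {
  ans_finite : forall X, Con X -> finite_set X;
  ans_rel_con : forall X Y, nm X Y -> Con X /\ Con Y;
  ans_down : forall X Y, X `<=` Y -> Con Y -> Con X;
  ans_single : forall a : A, Con [set a];
  ans_union : forall X T, nm X T -> Con (X `|` T);
  ans_refl : forall X Y, Con X -> Y `<=` X -> nm X Y;
  ans_cut : forall X T Y, nm X T -> nm (T `|` X) Y -> nm X Y;
  ans_and : forall X Y Z, nm X Y -> nm X Z -> nm X (Y `|` Z)
}.

Definition tilde (A : Type) (nm : set A -> set A -> Prop) (X : set A) : set A :=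
  [set t | nm X [set t]].

From mathcomp Require Import all_boot.
From mathcomp Require Import boolp classical_sets cardinality.
Set Implicit Arguments.
Local Open Scope classical_set_scope.

(* [X] itself belongs to the family by reflexivity (4).  Conversely, for a
   member [Y], finiteness of [X] lets (6) combine [X `<=` tilde Y] into
   [Y |~ X], and since [Y `<=` X] cut (5) turns [X |~ {t}] into [Y |~ {t}]. *)

Section AbstractNonmonotonicSystem.

Variables (A : Type) (Con : set (set A)) (nm : set A -> set A -> Prop).
Hypothesis ans : ANS Con nm.

Lemma sub_tilde (X : set A) : Con X -> X `<=` tilde nm X.
Proof. by move=> CX x Xx; apply: (ans_refl ans CX) => y /= ->. Qed.

Lemma nm_seq (Y : set A) (s : seq {classic A}) :
  Con Y -> [set` s] `<=` tilde nm Y -> nm Y [set` s].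
Proof.
move=> CY; elim: s => [|a s IHs] s_tilde.
  by rewrite set_nil; apply: (ans_refl ans CY); apply: sub0set.
have set_cons : [set` (a :: s)] = [set a] `|` [set` s].
  apply/seteqP; split=> x /=; rewrite in_cons.
    by case/orP=> [/eqP ->|sx]; [left|right].
  by case=> [->|sx]; rewrite ?eqxx ?sx ?orbT.
rewrite set_cons in s_tilde *; apply: (ans_and ans).
  by apply: s_tilde; left.
by apply: IHs => x sx; apply: s_tilde; right.
Qed.

Lemma nm_finite (Y X : set A) :
  Con Y -> finite_set X -> X `<=` tilde nm Y -> nm Y X.
Proof.
move=> CY /(@finite_seqP {classic A})[s ->].
exact: nm_seq.
Qed.

Lemma tilde_cut (Y X : set A) :
  Y `<=` X -> nm Y X -> tilde nm X `<=` tilde nm Y.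
Proof. by move=> YX YnmX t Xt; apply: (ans_cut ans YnmX); rewrite setUidl. Qed.

End AbstractNonmonotonicSystem.

Theorem lemma2 (A : Type) (Con : set (set A)) (nm : set A -> set A -> Prop)
  (H : ANS Con nm) (X : set A) (HX : Con X) :
  \bigcap_(Y in [set Y | Con Y /\ Y `<=` X /\ X `<=` tilde nm Y]) tilde nm Y
  = tilde nm X.
Proof.
apply/seteqP; split=> t.
  by apply; split=> //; split=> //; exact: sub_tilde H X HX.
move=> Xt Y [CY [YX X_tildeY]].
have Y_nm_X : nm Y X := nm_finite H CY (ans_finite H HX) X_tildeY.
exact: (tilde_cut H YX Y_nm_X).
Qed.
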